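(* Let $\mathbb{Z}$ be a finite-dimensional Euclidean space, $L>0$, $G:\mathbb{Z}\to\mathbb{Z}$ $\frac1L$-co-coercive, $\beta_k\in(0,1)$, $\eta_k=(1-\beta_k)/L$, and let $z^0\in\mathbb{Z}$, $\tilde z^k\in\mathbb{Z}$ arbitrary and $z^{k+1}=\beta_kz^0+(1-\beta_k)z^k-\eta_k\tilde z^k$ for $k\ge0$. Then for $k\ge0$, \[\frac1{2L}\|G(z^{k+1})\|^2-\frac{\beta_k}{1-\beta_k}\langle G(z^{k+1}),z^0-z^{k+1}\rangle\le\frac{1-2\beta_k}{2L}\|G(z^k)\|^2-\beta_k\langle G(z^k),z^0-z^k\rangle+\frac{\beta_k}L\langle G(z^k),G(z^k)-\tilde z^k\rangle+\frac1{2L}\|G(z^k)-\tilde z^k\|^2.\] In particular, if $\beta_k=1/(k+2)$, then for $k\ge0$, \[\mathcal{L}_{k+1}\le\mathcal{L}_k+\frac1{12L}\|G(z^k)\|^2+\frac{4(k+1)^2}{L}\|G(z^k)-\tilde z^k\|^2,\] where $\mathcal{L}_k:=\frac{k(k+1)}{2L}\|G(z^k)\|^2-(k+1)\langle G(z^k),z^0-z^k\rangle$.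
   Context: $G$ is $\frac1L$-co-coercive if $\langle G(x_1)-G(x_2),x_1-x_2\rangle\ge\frac1L\|G(x_1)-G(x_2)\|^2$ for all $x_1,x_2$. *)

From mathcomp Require Import all_boot all_order all_algebra.
From mathcomp Require Import reals.
Set Implicit Arguments. Unset Strict Implicit. Unset Printing Implicit Defensive.
Import Order.TTheory GRing.Theory Num.Theory.
Local Open Scope ring_scope.

(* The finite-dimensional Euclidean space Z is modelled as R^n = 'rV[R]_n
   with the standard inner product. *)
Definition dotp (R : realType) (n : nat) (u v : 'rV[R]_n) : R :=
  \sum_(i < n) u ord0 i * v ord0 i.

Definition sqnorm (R : realType) (n : nat) (u : 'rV[R]_n) : R := dotp u u.

Definition cocoercive (R : realType) (n : nat) (L : R)
  (G : 'rV[R]_n -> 'rV[R]_n) : Prop :=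
  forall x1 x2 : 'rV[R]_n,
    dotp (G x1 - G x2) (x1 - x2) >= L^-1 * sqnorm (G x1 - G x2).

Definition lyap (R : realType) (n : nat) (L : R)
  (G : 'rV[R]_n -> 'rV[R]_n) (z : nat -> 'rV[R]_n) (k : nat) : R :=
  (k%:R * (k%:R + 1)) / (2 * L) * sqnorm (G (z k))
  - (k%:R + 1) * dotp (G (z k)) (z 0%N - z k).

(* The one-step inequality is the cocoercivity of G at the pair (z^{k+1}, z^k)
   plus the nonnegative term (1/2L)|G z^{k+1} - 2 G z^k + z~^k|^2: once
   z^{k+1} - z^k and z^0 - z^{k+1} are expressed through the recursion, the
   difference of its two sides is exactly the sum of these two quantities.
   For beta_k = 1/(k+2), multiplying it by (k+1)(k+2) turns the left side into
   L_{k+1} and the right side into L_k plus the error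
   (k+1)/L <G z^k, e> + (k+1)(k+2)/(2L) |e|^2, where e = G z^k - z~^k;
   Young's inequality with weight 1/6 bounds this error by the stated terms. *)
From mathcomp Require Import all_boot all_order all_algebra.
From mathcomp Require Import reals.
From mathcomp Require Import ring lra.
Import Order.TTheory GRing.Theory Num.Theory.
Local Open Scope ring_scope.

Lemma ler_gap {R : numDomainType} {x y d : R} : y - x = d -> 0 <= d -> x <= y.
Proof. by rewrite -subr_ge0 => ->. Qed.

Section Dotp.
Context {R : realType} {n : nat}.
Implicit Types u v w : 'rV[R]_n.

Lemma dotpC u v : dotp u v = dotp v u.
Proof. by apply: eq_bigr => i _; rewrite mulrC. Qed.

Lemma dotpDr u v w : dotp u (v + w) = dotp u v + dotp u w.
Proof. by rewrite /dotp -big_split; apply: eq_bigr => i _; rewrite mxE mulrDr. Qed.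

Lemma dotpZr u v (a : R) : dotp u (a *: v) = a * dotp u v.
Proof. by rewrite /dotp mulr_sumr; apply: eq_bigr => i _; rewrite mxE mulrCA. Qed.

Lemma dotpNr u v : dotp u (- v) = - dotp u v.
Proof. by rewrite -scaleN1r dotpZr mulN1r. Qed.

Lemma dotpBr u v w : dotp u (v - w) = dotp u v - dotp u w.
Proof. by rewrite dotpDr dotpNr. Qed.

Lemma dotpDl u v w : dotp (v + w) u = dotp v u + dotp w u.
Proof. by rewrite dotpC dotpDr !(dotpC u). Qed.

Lemma dotpZl u v (a : R) : dotp (a *: v) u = a * dotp v u.
Proof. by rewrite dotpC dotpZr dotpC. Qed.

Lemma dotpNl u v : dotp (- v) u = - dotp v u.
Proof. by rewrite dotpC dotpNr dotpC. Qed.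

Lemma dotpBl u v w : dotp (v - w) u = dotp v u - dotp w u.
Proof. by rewrite dotpDl dotpNl. Qed.

Lemma sqnormZ u (a : R) : sqnorm (a *: u) = a ^+ 2 * sqnorm u.
Proof. by rewrite /sqnorm dotpZl dotpZr mulrA -expr2. Qed.

Lemma sqnorm_ge0 u : 0 <= sqnorm u.
Proof. by apply: sumr_ge0 => i _; rewrite -expr2 sqr_ge0. Qed.

Lemma dotp_young u v {r : R} :
  0 < r -> 2 * dotp u v <= r * sqnorm u + r^-1 * sqnorm v.
Proof.
move=> r_gt0; have rV_ge0 : 0 <= r^-1 by rewrite invr_ge0 ltW.
apply: (ler_gap _ (mulr_ge0 rV_ge0 (sqnorm_ge0 (r *: u - v)))).
rewrite /sqnorm !(dotpBl, dotpBr, dotpZl, dotpZr) (dotpC v u).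
by field; rewrite gt_eqF.
Qed.

End Dotp.

Section HalpernStep.
Variables (R : realType) (n : nat) (L : R) (G : 'rV[R]_n -> 'rV[R]_n).
Hypotheses (L_gt0 : 0 < L) (G_cocoercive : cocoercive L G).

Lemma halpern_step_bound {b : R} {a x t y : 'rV[R]_n} :
  0 < b < 1 ->
  y = b *: a + (1 - b) *: x - ((1 - b) / L) *: t ->
     (2 * L)^-1 * sqnorm (G y) - b / (1 - b) * dotp (G y) (a - y)
  <= (1 - 2 * b) / (2 * L) * sqnorm (G x) - b * dotp (G x) (a - x)
     + b / L * dotp (G x) (G x - t) + (2 * L)^-1 * sqnorm (G x - t).
Proof.
move=> /andP[b_gt0 b_lt1] y_def.
have := G_cocoercive y x; rewrite -subr_ge0 => coco_gap.
have square := sqnorm_ge0 (G y - 2 *: G x + t).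
have c_ge0 : 0 <= (2 * L)^-1 by rewrite invr_ge0 mulr_ge0 // ltW.
apply: (ler_gap _ (addr_ge0 coco_gap (mulr_ge0 c_ge0 square))).
move: (G y) (G x) => g1 g0; rewrite y_def /sqnorm.
rewrite !(dotpDl, dotpDr, dotpBl, dotpBr, dotpZl, dotpZr, dotpNl, dotpNr).
rewrite (dotpC g0 g1) (dotpC t g1) (dotpC t g0).
by field; rewrite gt_eqF //= subr_eq0 eq_sym lt_eqF.
Qed.

Variables (z zt : nat -> 'rV[R]_n).
Hypothesis z_rec : forall k, z k.+1 = (k%:R + 2)^-1 *: z 0%N
  + (1 - (k%:R + 2)^-1) *: z k - ((1 - (k%:R + 2)^-1) / L) *: zt k.

Lemma lyap_step_error k :
  lyap L G z k.+1
  <= lyap L G z k + (k%:R + 1) / L * dotp (G (z k)) (G (z k) - zt k)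
     + (k%:R + 1) * (k%:R + 2) / (2 * L) * sqnorm (G (z k) - zt k).
Proof.
have K_ge0 : 0 <= k%:R :> R by [].
have b_bounds : 0 < (k%:R + 2 : R)^-1 < 1.
  by rewrite invr_gt0 invf_lt1; lra.
have := halpern_step_bound b_bounds (z_rec k); rewrite -subr_ge0 => step_gap.
have c_ge0 : 0 <= (k%:R + 1) * (k%:R + 2) :> R by rewrite mulr_ge0 //; lra.
apply: (ler_gap _ (mulr_ge0 c_ge0 step_gap)).
by rewrite /lyap -natr1; field; rewrite !gt_eqF //; lra.
Qed.

Lemma lyap_step k :
  lyap L G z k.+1
  <= lyap L G z k + (12 * L)^-1 * sqnorm (G (z k))
     + 4 * (k%:R + 1) ^+ 2 / L * sqnorm (G (z k) - zt k).
Proof.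
apply: le_trans (lyap_step_error k) _.
move: (G (z k)) (zt k) => g t.
have K_ge0 : 0 <= k%:R :> R by [].
have sixth_gt0 : 0 < 6^-1 :> R by rewrite invr_gt0.
have := dotp_young g ((k%:R + 1) *: (g - t)) sixth_gt0.
rewrite -subr_ge0 => young_gap.
have c_ge0 : 0 <= (2 * L)^-1 by rewrite invr_ge0 mulr_ge0 // ltW.
(* 4 (k+1)^2 = 3 (k+1)^2 + (k+1)(k+2)/2 + k(k+1)/2, the first part from Young *)
have slack_ge0 : 0 <= k%:R * (k%:R + 1) / (2 * L) * sqnorm (g - t).
  by rewrite !mulr_ge0 ?sqnorm_ge0 //; lra.
apply: (ler_gap _ (addr_ge0 (mulr_ge0 c_ge0 young_gap) slack_ge0)).
by rewrite dotpZr sqnormZ; field; rewrite gt_eqF.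
Qed.

End HalpernStep.

Theorem lemma15 (R : realType) (n : nat) (L : R) (G : 'rV[R]_n -> 'rV[R]_n)
  (beta : nat -> R) (z zt : nat -> 'rV[R]_n) :
  0 < L ->
  cocoercive L G ->
  (forall k, 0 < beta k < 1) ->
  (forall k, z k.+1 = beta k *: z 0%N + (1 - beta k) *: z k
                      - ((1 - beta k) / L) *: zt k) ->
  (forall k : nat,
     (2 * L)^-1 * sqnorm (G (z k.+1))
       - beta k / (1 - beta k) * dotp (G (z k.+1)) (z 0%N - z k.+1)
     <= (1 - 2 * beta k) / (2 * L) * sqnorm (G (z k))
        - beta k * dotp (G (z k)) (z 0%N - z k)
        + beta k / L * dotp (G (z k)) (G (z k) - zt k)
        + (2 * L)^-1 * sqnorm (G (z k) - zt k))
  /\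
  ((forall k, beta k = (k%:R + 2)^-1) ->
   forall k : nat,
     lyap L G z k.+1
     <= lyap L G z k + (12 * L)^-1 * sqnorm (G (z k))
        + 4 * (k%:R + 1) ^+ 2 / L * sqnorm (G (z k) - zt k)).
Proof.
move=> L_gt0 G_coco beta_bounds z_rec; split.
  by move=> k; apply: halpern_step_bound.
move=> beta_def; apply: lyap_step => // k.
by rewrite z_rec beta_def.
Qed.
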